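(* Let $\mathbf{p}=(p_d)_{d\ge0}$ and $\mathbf{q}=(q_w)_{w\ge0}$ be probability distributions on the nonnegative integers with $\lambda=\sum_d d p_d\in(0,\infty)$, $\mu=\sum_w w q_w\in(0,\infty)$, $p_d=0$ for $d>\bar d$, $q_w=0$ for $w>\bar w$ (for some integers $\bar d,\bar w\ge1$), and $p_0=q_0=q_1=0$. Let $X$ be the random variable with $$\mathbb{P}(X=k)=\sum_{d=1}^{\bar d}\frac{d p_d}{\lambda}\sum_{(w_1-1)+\dots+(w_{d-1}-1)=k}\frac{\prod_{j=1}^{d-1}w_jq_{w_j}}{\mu^{d-1}},$$ the inner sum being over tuples of positive integers $(w_1,\dots,w_{d-1})$. Let $q\in(0,1)$, $w\ge2$, and consider a clique of size $w$ with initially active parent $u$ and children $1,\dots,w-1$, where the numbers $X_1,\dots,X_{w-1}$ of own children of these vertices are i.i.d. distributed as $X$, the contagion being as described in the context; let $L$ be the final number of active vertices among $1,\dots,w-1$ and $X_{(1)}\le\dots\le X_{(w-1)}$ the order statistics of the $X_i$. Then for any $1\le\ell\le w-1$ and any integers $0\le x_1\le x_2\le\dots\le x_\ell$, $$\mathbb{P}(L=\ell,X_{(1)}=x_1,\dots,X_{(\ell)}=x_\ell)=\Big(\prod_{i=1}^{\ell}\mathbb{1}_{\{\lfloor q(x_i+w-1)\rfloor+1\le i\}}\Big)\frac{(w-1)!}{(w-1-\ell)!\,\prod_{i=1}^{\ell-1}s_i!}\Big(\prod_{i=1}^{\ell}\mathbb{P}(X=x_i)\Big)\Big(\mathbb{P}\big(\lfloor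 q(X+w-1)\rfloor>\ell\big)\Big)^{w-1-\ell},$$ and $$\mathbb{P}(L=0)=\Big(\mathbb{P}\big(\lfloor q(X+w-1)\rfloor>0\big)\Big)^{w-1}.$$
   Context: Contagion inside the clique: vertex $i\in\{1,\dots,w-1\}$ has as neighbors the other $w-1$ vertices of the clique (including $u$) and $X_i$ further vertices (its own children), which are inactive and remain inactive; thus its degree is $X_i+w-1$. Initially only $u$ is active; in discrete time, an inactive vertex becomes active as soon as its proportion of active neighbors is strictly greater than $q$, and active vertices remain active. For a nondecreasing sequence $x_1\le\dots\le x_\ell$ and $i\in\{1,\dots,\ell-1\}$: $s_i=\max\{j\ge0\mid x_i=x_{i+j}\}+1$ if $i=1$ or $x_{i-1}<x_i$, and $s_i=1$ if $x_{i-1}=x_i$ (so that when $x_{i-1}<x_i$ or $i=1$, $s_i$ is the number of indices $i'\ge i$ with $x_{i'}=x_i$; e.g. for $x_1<x_2=x_3=x_4<x_5=x_6$, $\prod_{i=1}^5 s_i!=3!\,2!$). *)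

From HB Require Import structures.
From mathcomp Require Import all_boot all_order all_algebra.
From mathcomp Require Import reals.
Set Implicit Arguments. Unset Strict Implicit. Unset Printing Implicit Defensive.
Import Order.TTheory GRing.Theory Num.Theory.
Local Open Scope ring_scope.

Definition mean (R : realType) (p : nat -> R) (dbar : nat) : R :=
  \sum_(d < dbar.+1) (d%:R * p d).

(* The constraint sum (w_j - 1) = k forces w_j <= k+1, so ranging the w_j over
   'I_(k.+2) (i.e. 0..k+1) and requiring w_j > 0 is exactly the set of tuples
   of positive integers in the paper. *)
Definition pX (R : realType) (p qw : nat -> R) (dbar wbar : nat) (k : nat) : R :=
  \sum_(1 <= d < dbar.+1)
    (d%:R * p d / mean p dbar) *
    (\sum_(f : {ffun 'I_(d.-1) -> 'I_(k.+2)}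
            | [forall j, (0 < (f j : nat))%N] && (\sum_j (f j : nat).-1 == k)%N)
       (\prod_j ((f j : nat)%:R * qw (f j))) / (mean qw wbar) ^+ d.-1).

(* X takes values in [0, (dbar-1)(wbar-1)]; Xsupp is a strict upper bound on
   its support, used to write probabilities as finite sums. *)
Definition Xsupp (dbar wbar : nat) : nat := (dbar.-1 * wbar.-1).+1.

Definition PrX (R : realType) (p qw : nat -> R) (dbar wbar : nat)
    (P0 : pred nat) : R :=
  \sum_(k < Xsupp dbar wbar | P0 k) pX p qw dbar wbar k.

(* One step of the contagion inside the clique {u, 1, ..., w-1}; children are
   indexed by 'I_(w-1); x i = X_i; A = set of active children (u always active).
   An inactive child i has 1 + #|A| active neighbours (u and the active
   children) out of its degree x i + w - 1. *)
Definition step (R : realType) (q : R) (w : nat) (x : 'I_(w - 1) -> nat)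
    (A : {set 'I_(w - 1)}) : {set 'I_(w - 1)} :=
  A :|: [set i | q < (1 + #|A|)%:R / (x i + (w - 1))%:R].

(* final number of active children; the set of active children increases
   strictly until it is stable, hence is stable after w-1 steps *)
Definition finalL (R : realType) (q : R) (w : nat) (x : 'I_(w - 1) -> nat) : nat :=
  #|iter (w - 1) (step q x) set0|.

Definition order_stats (w : nat) (x : 'I_(w - 1) -> nat) : seq nat :=
  sort leq [seq x i | i <- enum 'I_(w - 1)].

Definition PrIID (R : realType) (p qw : nat -> R) (dbar wbar w : nat)
    (E : ('I_(w - 1) -> nat) -> bool) : R :=
  \sum_(x : {ffun 'I_(w - 1) -> 'I_(Xsupp dbar wbar)})
     (\prod_i pX p qw dbar wbar (x i)) * (E (fun i => (x i : nat)))%:R.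

(* s_i of the context, with 0-based index i (paper's s_{i+1}) *)
Definition s_mult (xs : seq nat) (i : nat) : nat :=
  if (i == 0)%N || (nth 0 xs i.-1 < nth 0 xs i)%N then
    (\max_(j < size xs - i | nth 0 xs (i + j) == nth 0 xs i) (j : nat)).+1
  else 1.

From HB Require Import structures.
From mathcomp Require Import all_boot all_order all_algebra.
From mathcomp Require Import reals.
From mathcomp Require Import ring.
Import Order.TTheory GRing.Theory Num.Theory.
Set Implicit Arguments. Unset Strict Implicit. Unset Printing Implicit Defensive.

(* A child with X_i = v becomes active as soon as at least threshold v other
   children are active, so the number of active children evolves by
   m |-> #{i | threshold X_i <= m} from 0, and the final count L is the least
   fixed point of this monotone map.  Hence L = l with X_(1..l) = xs holds iff
   threshold xs_i <= i - 1 for i <= l and the children of threshold <= l are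
   exactly a rearrangement of xs.  For i.i.d. X_i the probability of the latter
   is the multinomial number (w-1)! / ((w-1-l)! prod s_i!) of ways to place xs
   among the children, times prod P(X = xs_i), times P(threshold X > l) for each
   of the w-1-l remaining children. *)

Lemma sum_count_mem (T : finType) (s : seq T) :
  (\sum_(t : T) count_mem t s)%N = size s.
Proof.
elim: s => [|y s IHs]; first by rewrite big1.
rewrite big_split /= IHs (bigD1 y) //= eqxx big1 // => t.
by rewrite eq_sym => /negbTE ->.
Qed.

Lemma prod_fact_count_rem (T : finType) (s : seq T) t : t \in s ->
  (\prod_(u : T) (count_mem u s)`!)%N
  = (count_mem t s * \prod_(u : T) (count_mem u (rem t s))`!)%N.
Proof.
move=> st; have count_s u : count_mem u s = ((t == u) + count_mem u (rem t s))%N.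
  by rewrite (permP (perm_to_rem st)) /=.
rewrite (bigD1 t) //= [in RHS](bigD1 t) //= mulnA count_s eqxx add1n -factS.
by congr (_ * _)%N; apply: eq_bigr => u /negbTE ut; rewrite count_s eq_sym ut.
Qed.

Lemma perm_cons_rem (T : eqType) (x : T) s t :
  perm_eq (x :: s) t = (x \in t) && perm_eq s (rem x t).
Proof.
have [xt|xNt] /= := boolP (x \in t); first by rewrite (permPr (perm_to_rem xt)) perm_cons.
by apply: contraNF xNt => /perm_mem <-; exact: mem_head.
Qed.

Section PermFilterWeight.

Variables (R : comPzRingType) (T : finType) (f : T -> R) (P : pred T).
Local Open Scope ring_scope.

Definition ffun_cons n (a : T) (y : {ffun 'I_n -> T}) : {ffun 'I_n.+1 -> T} :=
  [ffun i => if unlift ord0 i is Some j then y j else a].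

Lemma ffun_cons0 n a (y : {ffun 'I_n -> T}) : ffun_cons a y ord0 = a.
Proof. by rewrite ffunE unlift_none. Qed.

Lemma ffun_cons_lift n a (y : {ffun 'I_n -> T}) j : ffun_cons a y (lift ord0 j) = y j.
Proof. by rewrite ffunE liftK. Qed.

Lemma codom_ffun_cons n a (y : {ffun 'I_n -> T}) : codom (ffun_cons a y) = a :: codom y.
Proof.
rewrite !codomE enum_ordSl /= ffun_cons0 -map_comp.
by congr (_ :: _); apply: eq_map => j; rewrite /= ffun_cons_lift.
Qed.

Lemma sum_ffunS n (F : {ffun 'I_n.+1 -> T} -> R) :
  \sum_(x : {ffun 'I_n.+1 -> T}) F x
  = \sum_(a : T) \sum_(y : {ffun 'I_n -> T}) F (ffun_cons a y).
Proof.
rewrite pair_bigA (reindex (fun ay => ffun_cons ay.1 ay.2)) //=.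
exists (fun x : {ffun 'I_n.+1 -> T} => (x ord0, [ffun j => x (lift ord0 j)])).
  move=> [a y] _ /=; rewrite ffun_cons0; congr pair.
  by apply/ffunP => j; rewrite ffunE ffun_cons_lift.
move=> x _; apply/ffunP => i; rewrite ffunE.
by case: unliftP => [j ->|->]; rewrite ?ffunE.
Qed.

Lemma prod_ffun_cons n a (y : {ffun 'I_n -> T}) :
  \prod_(i < n.+1) f (ffun_cons a y i) = f a * \prod_(i < n) f (y i).
Proof.
by rewrite big_ord_recl ffun_cons0; congr (_ * _); apply: eq_bigr => j; rewrite ffun_cons_lift.
Qed.

Definition perm_filter_weight n (xs : seq T) : R :=
  \sum_(x : {ffun 'I_n -> T}) (\prod_i f (x i)) * (perm_eq (filter P (codom x)) xs)%:R.

Local Notation W := perm_filter_weight.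
Local Notation weight_notP := (\sum_(t | ~~ P t) f t).

Lemma perm_filter_weight0 : W 0 [::] = 1.
Proof.
rewrite /W (eq_bigr (fun _ => 1)) ?sumr_const ?card_ffun ?card_ord //.
by move=> x _; rewrite big_ord0 mul1r codomE enum_ord0.
Qed.

Lemma perm_filter_weight_oversize n xs : (n < size xs)%N -> W n xs = 0.
Proof.
move=> n_lt_xs; apply: big1 => x _.
case: (boolP (perm_eq _ _)) => [/perm_size size_xs|]; last by rewrite mulr0.
have := count_size P (codom x); rewrite -size_filter size_xs size_codom card_ord.
by rewrite leqNgt n_lt_xs.
Qed.

Lemma perm_filter_weightS n xs : all P xs ->
  W n.+1 xs = weight_notP * W n xs + \sum_(t | t \in xs) f t * W n (rem t xs).
Proof.
move=> /allP Pxs; rewrite /W sum_ffunS (bigID P) /= addrC; congr (_ + _).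
  rewrite mulr_suml; apply: eq_bigr => t /negbTE NPt; rewrite mulr_sumr.
  by apply: eq_bigr => y _; rewrite prod_ffun_cons codom_ffun_cons /= NPt mulrA.
rewrite (bigID (mem xs)) /= [X in _ + X]big1 ?addr0 => [|t /andP[Pt /negbTE xNt]].
  apply: eq_big => [t|t /andP[_ xt]]; first by apply/andP/idP => [[]//|xt]; rewrite Pxs.
  rewrite mulr_sumr; apply: eq_bigr => y _.
  by rewrite prod_ffun_cons codom_ffun_cons /= Pxs // perm_cons_rem xt mulrA.
by apply: big1 => y _; rewrite codom_ffun_cons /= Pt perm_cons_rem xNt mulr0.
Qed.

(* The multinomial count: the P-letters of such a word spell a rearrangement of
   xs in n! / ((n - size xs)! prod_t (count_mem t xs)!) possible arrangements,
   and the other n - size xs letters range freely over the complement of P. *)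
Lemma perm_filter_weightE n xs : all P xs -> (size xs <= n)%N ->
  W n xs * ((n - size xs)`! * \prod_t (count_mem t xs)`!)%:R
  = n`!%:R * \prod_(t <- xs) f t * weight_notP ^+ (n - size xs).
Proof.
elim: n xs => [|n IHn] xs Pxs.
  rewrite leqn0 => /nilP ->.
  by rewrite perm_filter_weight0 big1 // big_nil subnn expr0 !mulr1.
set l := size xs => l_le_n1.
have first_notP : weight_notP * W n xs * ((n.+1 - l)`! * \prod_t (count_mem t xs)`!)%:R
    = (n.+1 - l)%:R * (n`!%:R * \prod_(t <- xs) f t * weight_notP ^+ (n.+1 - l)).
  have [l_le_n|l_gt_n] := leqP l n; last first.
    by rewrite perm_filter_weight_oversize // mulr0 mul0r (eqP l_gt_n) ?subnn mul0r.
  rewrite subSn // factS -mulnA natrM exprS.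
  transitivity ((n - l).+1%:R * weight_notP
                * (W n xs * ((n - l)`! * \prod_t (count_mem t xs)`!)%:R)).
    by ring.
  by rewrite IHn //; ring.
have first_in_xs t : t \in xs ->
    f t * W n (rem t xs) * ((n.+1 - l)`! * \prod_u (count_mem u xs)`!)%:R
    = (count_mem t xs)%:R * (n`!%:R * \prod_(u <- xs) f u * weight_notP ^+ (n.+1 - l)).
  move=> xt; have l_gt0 : (0 < l)%N by rewrite /l; case: (xs) xt.
  have size_rem : size (rem t xs) = l.-1 by rewrite size_rem.
  have Prem : all P (rem t xs) by apply/allP => u /mem_rem; apply/allP.
  have sub_size_rem : (n.+1 - l = n - size (rem t xs))%N.
    by rewrite size_rem -[in LHS](prednK l_gt0).
  rewrite sub_size_rem; transitivity ((count_mem t xs)%:R * f t *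
    (W n (rem t xs) * ((n - size (rem t xs))`! * \prod_u (count_mem u (rem t xs))`!)%:R)).
    by rewrite (prod_fact_count_rem xt) !natrM; ring.
  rewrite IHn //; last by rewrite size_rem -ltnS prednK.
  by rewrite [in RHS](perm_big _ (perm_to_rem xt)) big_cons /=; ring.
rewrite perm_filter_weightS // mulrDl first_notP mulr_suml (eq_bigr _ first_in_xs).
have count_in : (\sum_(t in xs) count_mem t xs)%N = l.
  rewrite /l -sum_count_mem [RHS](bigID (mem xs)) /=.
  by rewrite [X in (_ + X)%N]big1 ?addn0 // => t /count_memPn.
by rewrite -mulr_suml -natr_sum count_in -mulrDl -natrD subnK // factS natrM; ring.
Qed.

End PermFilterWeight.

Section SortedDownClosed.

Variables (T : eqType) (x0 : T) (leT : rel T) (P : pred T).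
Hypothesis leT_tr : transitive leT.
Hypothesis P_down : forall u v, leT u v -> P v -> P u.

Lemma sorted_down_count0 y s : sorted leT (y :: s) -> ~~ P y -> count P s = 0.
Proof.
move=> s_sorted NPy; have /allP y_le_s := order_path_min leT_tr s_sorted.
apply/eqP; rewrite -leqn0 leqNgt -has_count.
by apply/hasPn => v /y_le_s y_le_v; apply: contra NPy; apply: P_down.
Qed.

Lemma nth_sorted_down s i : sorted leT s -> i < size s -> P (nth x0 s i) = (i < count P s).
Proof.
elim: s i => [//|y s IHs] i s_sorted /=; have s'_sorted := path_sorted s_sorted.
have [Py|NPy] := boolP (P y); first by case: i => [|i] //=; rewrite ltnS; apply: IHs.
rewrite (sorted_down_count0 s_sorted NPy); case: i => [|i] /=; first by rewrite (negbTE NPy).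
rewrite ltnS => i_lt_s; apply: contraNF NPy; apply: P_down.
by apply: (allP (order_path_min leT_tr s_sorted)); apply: mem_nth.
Qed.

Lemma filter_sorted_down s : sorted leT s -> filter P s = take (count P s) s.
Proof.
elim: s => [//|y s IHs] s_sorted /=; have [Py|NPy] := boolP (P y).
  by rewrite IHs // (path_sorted s_sorted).
have count_s := sorted_down_count0 s_sorted NPy.
by rewrite count_s take0; apply/eqP; rewrite -size_eq0 size_filter count_s.
Qed.

End SortedDownClosed.

Lemma s_mult_cons_succ y ys i :
  s_mult (y :: ys) i.+1 = if (i == 0) && (nth 0 ys 0 <= y) then 1 else s_mult ys i.
Proof. by rewrite /s_mult /= subSS; case: i => [|i] //=; rewrite [_ <= y]leqNgt; case: (y < _). Qed.

Lemma s_mult_cons_head y ys : sorted leq (y :: ys) -> s_mult (y :: ys) 0 = count_mem y (y :: ys).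
Proof.
move=> s_sorted; set c := count_mem y (y :: ys).
have le_y : {in y :: ys, forall v, (v <= y) = (v == y)}.
  move=> v; rewrite inE => /predU1P[->|v_in]; first by rewrite leqnn eqxx.
  by rewrite eqn_leq (allP (order_path_min leq_trans s_sorted) v v_in) andbT.
have c_gt0 : 0 < c by rewrite /c /= eqxx.
have c_le : c <= (size ys).+1 := count_size _ _.
have nth_eq (j : 'I_((size ys).+1 - 0)) : (nth 0 (y :: ys) (0 + j) == y) = (j < c).
  have j_lt : j < size (y :: ys) by rewrite (leq_trans (ltn_ord j)) ?subn0.
  have le_y_down u v : u <= v -> v <= y -> u <= y by apply: leq_trans.
  rewrite add0n -le_y ?mem_nth // (nth_sorted_down 0 leq_trans le_y_down s_sorted j_lt).
  by rewrite (eq_in_count le_y).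
rewrite /s_mult /= -(prednK c_gt0); congr _.+1; apply/eqP; rewrite eqn_leq; apply/andP; split.
  by apply/bigmax_leqP => j; rewrite nth_eq => j_lt; rewrite -ltnS prednK.
have c1_lt : c.-1 < (size ys).+1 - 0 by rewrite subn0 prednK.
by apply: (@leq_bigmax_cond _ _ _ (Ordinal c1_lt)); rewrite nth_eq /= prednK.
Qed.

Lemma prod_fact_s_mult_cons y ys : sorted leq (y :: ys) ->
  \prod_(i < (size ys).+1) (s_mult (y :: ys) i)`!
  = (count_mem y ys).+1 * \prod_(i < size ys) (s_mult ys i)`!.
Proof.
move=> s_sorted; rewrite big_ord_recl s_mult_cons_head //= eqxx add1n.
under eq_bigr do rewrite /bump add1n s_mult_cons_succ.
case: ys s_sorted => [|z zs] s_sorted; first by rewrite !big_ord0.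
rewrite big_ord_recl [in RHS]big_ord_recl (s_mult_cons_head (path_sorted s_sorted)) [nth _ _ 0]/=.
have [z_le_y|y_lt_z] := leqP z y.
  have <- : y = z by apply/eqP; rewrite eqn_leq z_le_y andbT; case/andP: s_sorted.
  by rewrite /= eqxx add1n factS -[1`!]/1 mul1n -mulnA.
have -> : count_mem y (z :: zs) = 0.
  apply/count_memPn; rewrite inE negb_or neq_ltn y_lt_z /=; apply/negP => y_in.
  have /allP := order_path_min leq_trans (path_sorted s_sorted).
  by move=> /(_ y y_in); rewrite leqNgt y_lt_z.
by under eq_bigr do rewrite andbF; rewrite andbF !mul1n.
Qed.

Lemma prod_fact_s_mult N (xs : seq 'I_N) : sorted leq (map val xs) ->
  \prod_(i < size xs) (s_mult (map val xs) i)`! = \prod_(t : 'I_N) (count_mem t xs)`!.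
Proof.
elim: xs => [_|y ys IHys] /=; first by rewrite big_ord0 big1.
move=> s_sorted; rewrite -(size_map val) prod_fact_s_mult_cons // size_map.
rewrite IHys ?(path_sorted s_sorted) // (prod_fact_count_rem (mem_head y ys)) /= eqxx add1n.
by rewrite count_map; congr (_.+1 * _); apply: eq_count => t /=; rewrite val_eqE.
Qed.

Lemma s_mult_last xs : s_mult xs (size xs).-1 = 1.
Proof.
rewrite /s_mult; case: ifP => // _; congr _.+1; apply/eqP; rewrite -leqn0.
apply/bigmax_leqP => -[j j_lt] _ /=; move: j_lt.
by case: xs => [|y ys] //=; rewrite subSn // subnn ltnS.
Qed.

Lemma prod_fact_s_mult_belast xs :
  \prod_(i < (size xs).-1) (s_mult xs i)`! = \prod_(i < size xs) (s_mult xs i)`!.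
Proof.
case: xs => [|y ys]; first by rewrite !big_ord0.
by rewrite [RHS]big_ord_recr /= -[X in s_mult _ X]/((size (y :: ys)).-1) s_mult_last muln1.
Qed.

Lemma iter_homo_boundedP (c : nat -> nat) n l :
  {homo c : a b / a <= b} -> (forall m, c m <= n) ->
  iter n c 0 = l <-> c l = l /\ (forall m, m < l -> m < c m).
Proof.
move=> c_homo c_le_n.
have below_fix fp k : c fp = fp -> iter k c 0 <= fp.
  by move=> cfp; elim: k => //= k IHk; rewrite -cfp c_homo.
have below_lt k m : m < iter k c 0 -> m < c m.
  elim: k => //= k IHk m_lt; have [|le_m] := ltnP m (iter k c 0); first exact: IHk.
  exact: leq_trans m_lt (c_homo _ _ le_m).
have incr k : iter k c 0 <= c (iter k c 0) by elim: k => //= k IHk; apply: c_homo.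
have grow k : (k <= iter k c 0) || (c (iter k c 0) == iter k c 0).
  elim: k => // k IHk /=; have [ca|ca] := eqVneq (c (iter k c 0)) (iter k c 0).
    by rewrite !ca eqxx orbT.
  rewrite (negbTE ca) orbF in IHk.
  by rewrite (leq_ltn_trans IHk) // ltn_neqAle eq_sym ca incr.
have fix_n : c (iter n c 0) = iter n c 0.
  have a_le_n : iter n c 0 <= n by case: n c_le_n => //= k; apply.
  case/orP: (grow n) => [n_le_a|/eqP//].
  have a_n : iter n c 0 = n by apply/eqP; rewrite eqn_leq a_le_n.
  by have := incr n; rewrite a_n => n_le_c; apply/eqP; rewrite eqn_leq c_le_n.
split=> [<-|[cl l_below]]; first by split; [exact: fix_n | exact: below_lt].
apply/eqP; rewrite eqn_leq below_fix //= leqNgt; apply/negP => a_lt_l.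
by have := l_below _ a_lt_l; rewrite fix_n ltnn.
Qed.

Section Contagion.

Variables (R : realType) (q : R) (w : nat).
Local Open Scope ring_scope.
Hypothesis q_ge0 : 0 <= q.

(* Since 1 + m > q (v + w - 1) iff m >= threshold v, a child with X_i = v
   becomes active once m other children are iff active_at m v. *)
Definition threshold (v : nat) : int := Num.floor (q * (v + (w - 1))%:R).

Definition active_at (m : nat) : pred nat := fun v => threshold v <= m%:Z.

Lemma threshold_homo : {homo threshold : u v / (u <= v)%N >-> u <= v}.
Proof. by move=> u v uv; rewrite le_floor // ler_wpM2l // ler_nat leq_add2r. Qed.

Lemma active_at_down m u v : (u <= v)%N -> active_at m v -> active_at m u.
Proof. by move=> /threshold_homo; apply: le_trans. Qed.

Lemma active_at_homo m m' v : (m <= m')%N -> active_at m v -> active_at m' v.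
Proof. by rewrite /active_at -lez_nat => mm' /le_trans; apply. Qed.

Lemma stepE (x : 'I_(w - 1) -> nat) A :
  step q x A = A :|: [set i | active_at #|A| (x i)].
Proof.
congr (_ :|: _); apply/setP => i; rewrite !inE /active_at.
have deg_gt0 : 0 < (x i + (w - 1))%:R :> R.
  by rewrite ltr0n addn_gt0 (leq_ltn_trans _ (ltn_ord i)) ?orbT.
by rewrite ltr_pdivlMr // add1n -ltzD1 floor_lt_int -PoszD addn1.
Qed.

Lemma finalL_iter (x : 'I_(w - 1) -> nat) :
  finalL q x = iter (w - 1) (fun m => count (active_at m) (codom x)) 0%N.
Proof.
have card_active m : #|[set i | active_at m (x i)]| = count (active_at m) (codom x).
  by rewrite cardsE cardE /enum_mem size_filter codomE count_map enumT.
pose S k := iter k (step q x) set0.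
have S_inv k : S k \subset [set i | active_at #|S k| (x i)]
    /\ #|S k| = iter k (fun m => count (active_at m) (codom x)) 0%N.
  elim: k => [|k [sub_active card_S]] /=; first by rewrite sub0set cards0.
  rewrite /S /= -/(S k) stepE (setUidPr sub_active) card_active card_S; split=> //.
  apply/subsetP => i; rewrite !inE; apply: active_at_homo.
  by rewrite -card_active -card_S subset_leq_card.
by case: (S_inv (w - 1)%N).
Qed.

Lemma finalLP (x : 'I_(w - 1) -> nat) l : finalL q x = l <->
  count (active_at l) (codom x) = l
  /\ (forall m, (m < l)%N -> (m < count (active_at m) (codom x))%N).
Proof.
rewrite finalL_iter; apply: iter_homo_boundedP.
  by move=> a b ab; apply: sub_count => v; apply: active_at_homo.
by move=> m; rewrite (leq_trans (count_size _ _)) // size_codom card_ord.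
Qed.

Lemma finalL_order_statsE (x : 'I_(w - 1) -> nat) l xs :
  size xs = l -> sorted leq xs -> (l <= w - 1)%N ->
  (finalL q x == l) && (take l (order_stats x) == xs)
  = [forall i : 'I_l, active_at i (nth 0 xs i)]
    && perm_eq (filter (active_at l) (codom x)) xs.
Proof.
move=> size_xs xs_sorted l_le.
have -> : order_stats x = sort leq (codom x) by rewrite /order_stats codomE.
set s := sort leq (codom x).
have s_sorted : sorted leq s := sort_sorted leq_total _.
have perm_s : perm_eq (codom x) s by rewrite perm_sym perm_sort.
have size_s : size s = (w - 1)%N by rewrite size_sort size_codom card_ord.
have take_s : take (count (active_at l) (codom x)) s = filter (active_at l) s.
  by rewrite (filter_sorted_down leq_trans (@active_at_down l) s_sorted) (permP perm_s).
apply/idP/idP.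
  move=> /andP[/eqP /finalLP[count_l count_lt] /eqP <-].
  have take_l : take l s = filter (active_at l) s by rewrite -{1}count_l take_s.
  rewrite [in perm_eq _ _]take_l (perm_filter _ perm_s) andbT.
  apply/forallP => i; have i_lt_s : (i < size s)%N by rewrite size_s (leq_trans _ l_le).
  rewrite nth_take // (nth_sorted_down 0 leq_trans (@active_at_down i) s_sorted i_lt_s).
  by rewrite -(permP perm_s); apply: count_lt.
move=> /andP[/forallP active_xs perm_xs].
have count_l : count (active_at l) (codom x) = l by rewrite -size_filter (perm_size perm_xs).
have -> : finalL q x = l.
  apply/finalLP; split=> // m m_lt; have := active_xs (Ordinal m_lt).
  rewrite (nth_sorted_down 0 leq_trans (@active_at_down m) xs_sorted) ?size_xs // => m_lt_xs.
  by rewrite (leq_trans m_lt_xs) // -(permP perm_xs) count_filter sub_count // => v /andP[].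
rewrite eqxx -count_l take_s /=; apply/eqP.
apply: (sorted_eq leq_trans anti_leq (sorted_filter leq_trans _ s_sorted) xs_sorted).
by apply: perm_trans perm_xs; apply: perm_filter; rewrite perm_sym.
Qed.

End Contagion.

Local Open Scope ring_scope.

Lemma prodr_natr_bool (R : comPzSemiRingType) (I : finType) (b : pred I) :
  \prod_i (b i)%:R = [forall i, b i]%:R :> R.
Proof.
have [all_b|/forallPn[i Nbi]] := boolP [forall i, b i].
  by apply: big1 => i _; rewrite (forallP all_b i).
by rewrite (bigD1 i) //= (negbTE Nbi) mul0r.
Qed.

Lemma pX_eq0 (R : realType) (p qw : nat -> R) (dbar wbar k : nat) :
  (forall v, (wbar < v)%N -> qw v = 0) -> (Xsupp dbar wbar <= k)%N ->
  pX p qw dbar wbar k = 0.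
Proof.
move=> qw_supp k_ge; rewrite /pX big_nat_cond big1 // => d /andP[/andP[_ d_le] _].
rewrite big1 ?mulr0 // => f /andP[_ /eqP sum_f].
have [j wbar_lt|f_le] := pickP (fun j => wbar < f j)%N.
  by rewrite (bigD1 j) //= qw_supp // mulr0 !mul0r.
have : (k <= d.-1 * wbar.-1)%N.
  rewrite -sum_f -[X in (_ <= X * _)%N](card_ord d.-1) -sum_nat_const.
  by apply: leq_sum => j _; rewrite -subn1 -[wbar.-1]subn1 leq_sub2r // leqNgt f_le.
have dpred_le : (d.-1 <= dbar.-1)%N by rewrite -subn1 -[dbar.-1]subn1 leq_sub2r // -ltnS.
by move=> /leq_trans/(_ (leq_mul dpred_le (leqnn wbar.-1))); rewrite leqNgt k_ge.
Qed.

Lemma PrIID_perm_filter (R : realType) (p qw : nat -> R) (dbar wbar w : nat)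
    (A : pred nat) (xs : seq nat) :
  (forall v, (wbar < v)%N -> qw v = 0) ->
  all A xs -> sorted leq xs -> (size xs <= w - 1)%N ->
  PrIID p qw dbar wbar (fun x : 'I_(w - 1) -> nat => perm_eq (filter A (codom x)) xs)
  = (w - 1)`!%:R / ((w - 1 - size xs)`! * \prod_(i < size xs) (s_mult xs i)`!)%N%:R
    * \prod_(i < size xs) pX p qw dbar wbar (nth 0%N xs i)
    * PrX p qw dbar wbar (predC A) ^+ (w - 1 - size xs).
Proof.
move=> qw_supp A_xs xs_sorted size_le; set N := Xsupp dbar wbar.
(* PrIID only ranges over values below Xsupp; a larger entry of xs makes both
   sides vanish. *)
have [xs_lt|/allPn[v v_in v_ge]] := boolP (all (fun v => v < N)%N xs); last first.
  have v_idx : (index v xs < size xs)%N by rewrite index_mem.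
  rewrite [\prod_(i < _) pX _ _ _ _ _](bigD1 (Ordinal v_idx)) //= nth_index //.
  rewrite pX_eq0 1?leqNgt // !(mul0r, mulr0).
  apply: big1 => x _; apply/eqP; rewrite mulf_eq0 pnatr_eq0 eqb0; apply/orP; right.
  apply: contra v_ge => /perm_mem/(_ v); rewrite v_in mem_filter => /andP[_ /codomP[i ->]].
  exact: ltn_ord.
have [xs' xsE] : exists xs' : seq 'I_N, xs = map val xs'.
  exists (pmap insub xs); rewrite (pmap_filter (@insubK _ _ _)) (eq_filter (isSome_insub _)).
  exact/esym/all_filterP.
subst xs; rewrite size_map in size_le *.
pose f (t : 'I_N) := pX p qw dbar wbar (val t).
pose P : pred 'I_N := fun t => A (val t).
have perm_val (s : seq 'I_N) : perm_eq (map val s) (map val xs') = perm_eq s xs'.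
  by apply/idP/idP => [/(perm_map_inj val_inj)|/(perm_map val)].
have -> : PrIID p qw dbar wbar
    (fun x : 'I_(w - 1) -> nat => perm_eq (filter A (codom x)) (map val xs'))
    = perm_filter_weight f P (w - 1) xs'.
  apply: eq_bigr => x _; have -> : codom (fun i => val (x i)) = map val (codom x).
    by rewrite !codomE -[in RHS]map_comp.
  by rewrite filter_map perm_val.
have K_gt0 : (0 < (w - 1 - size xs')`! * \prod_(t : 'I_N) (count_mem t xs')`!)%N.
  by rewrite muln_gt0 fact_gt0 prodn_gt0 // => t; rewrite fact_gt0.
apply: (mulIf (x := ((w - 1 - size xs')`! * \prod_(t : 'I_N) (count_mem t xs')`!)%:R)).
  by rewrite pnatr_eq0 -lt0n.
rewrite perm_filter_weightE //; last by move: A_xs; rewrite all_map.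
have -> : \prod_(i < size xs') pX p qw dbar wbar (nth 0%N (map val xs') i) = \prod_(t <- xs') f t.
  by rewrite -(big_map val xpredT) (big_nth 0%N) big_mkord size_map.
rewrite (prod_fact_s_mult xs_sorted).
by field; move: K_gt0; rewrite muln_gt0 !pnatr_eq0 -!lt0n andbC.
Qed.

Lemma PrIID_finalL_order_statsE (R : realType) (p qw : nat -> R) (dbar wbar : nat)
    (q : R) (w l : nat) (xs : seq nat) :
  (forall v, (wbar < v)%N -> qw v = 0) -> 0 <= q ->
  size xs = l -> sorted leq xs -> (l <= w - 1)%N ->
  PrIID p qw dbar wbar
    (fun x : 'I_(w - 1) -> nat => (finalL q x == l) && (take l (order_stats x) == xs))
  = [forall i : 'I_l, active_at q w i (nth 0%N xs i)]%:R
    * (w - 1)`!%:R / ((w - 1 - l)`! * \prod_(i < l) (s_mult xs i)`!)%N%:R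
    * \prod_(i < l) pX p qw dbar wbar (nth 0%N xs i)
    * PrX p qw dbar wbar (fun k => l%:Z < threshold q w k) ^+ (w - 1 - l).
Proof.
move=> qw_supp q_ge0 size_xs xs_sorted l_le.
transitivity ([forall i : 'I_l, active_at q w i (nth 0%N xs i)]%:R * PrIID p qw dbar wbar
    (fun x : 'I_(w - 1) -> nat => perm_eq (filter (active_at q w l) (codom x)) xs)).
  rewrite mulr_sumr; apply: eq_bigr => x _; rewrite finalL_order_statsE //.
  by case: [forall _, _]; rewrite ?mul1r ?mul0r ?mulr0.
have [active_xs|_] := boolP [forall i : 'I_l, active_at q w i (nth 0%N xs i)]; last first.
  by rewrite !mul0r.
have A_xs : all (active_at q w l) xs.
  apply/(all_nthP 0%N) => i i_lt; rewrite size_xs in i_lt.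
  exact: active_at_homo (ltnW i_lt) (forallP active_xs (Ordinal i_lt)).
rewrite PrIID_perm_filter ?size_xs // !mulrA; congr (_ * _ ^+ _).
by apply: eq_bigl => k; rewrite /= ltNge.
Qed.

Theorem lemma2 (R : realType) (p qw : nat -> R) (dbar wbar : nat)
  (hdbar : (1 <= dbar)%N) (hwbar : (1 <= wbar)%N)
  (hp0 : forall d, 0 <= p d) (hp1 : \sum_(d < dbar.+1) p d = 1)
  (hpsupp : forall d, (dbar < d)%N -> p d = 0)
  (hq0 : forall v, 0 <= qw v) (hq1 : \sum_(v < wbar.+1) qw v = 1)
  (hqsupp : forall v, (wbar < v)%N -> qw v = 0)
  (hlam : 0 < mean p dbar) (hmu : 0 < mean qw wbar)
  (hp00 : p 0%N = 0) (hq00 : qw 0%N = 0) (hq01 : qw 1%N = 0)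
  (q : R) (hq : 0 < q < 1) (w : nat) (hw : (2 <= w)%N) :
  (forall (l : nat) (xs : seq nat),
     (1 <= l <= w - 1)%N -> size xs = l -> sorted leq xs ->
     PrIID p qw dbar wbar
       (fun x : 'I_(w - 1) -> nat => (finalL q x == l) && (take l (order_stats x) == xs))
     = (\prod_(i < l)
          ((Num.floor (q * (nth 0%N xs i + (w - 1))%:R) + 1 <= (i.+1)%:Z)%R)%:R)
       * ((w - 1)`!)%:R / (((w - 1 - l)`! * \prod_(i < l.-1) (s_mult xs i)`!)%N)%:R
       * (\prod_(i < l) pX p qw dbar wbar (nth 0%N xs i))
       * (PrX p qw dbar wbar
            (fun k => (l%:Z < Num.floor (q * (k + (w - 1))%:R))%R)) ^+ (w - 1 - l))
  /\
  PrIID p qw dbar wbar (fun x : 'I_(w - 1) -> nat => finalL q x == 0%N)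
  = (PrX p qw dbar wbar (fun k => (0 < Num.floor (q * (k + (w - 1))%:R))%R))
      ^+ (w - 1).
Proof.
have q_ge0 : 0 <= q by case/andP: hq => /ltW.
split=> [l xs /andP[_ l_le] size_xs xs_sorted|].
  rewrite PrIID_finalL_order_statsE // -prodr_natr_bool -size_xs prod_fact_s_mult_belast.
  congr (_ * _ * _ * _ * _); apply: eq_bigr => i _.
  by rewrite -[i.+1]addn1 PoszD lerD2r.
transitivity (PrIID p qw dbar wbar (fun x : 'I_(w - 1) -> nat =>
    (finalL q x == 0%N) && (take 0 (order_stats x) == [::]))).
  by apply: eq_bigr => x _; rewrite take0 eqxx andbT.
rewrite PrIID_finalL_order_statsE // !big_ord0 subn0 muln1.
have -> : [forall i : 'I_0, active_at q w i (nth 0%N [::] i)] by apply/forallP => -[].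
by rewrite mul1r divff ?mul1r // pnatr_eq0 -lt0n fact_gt0.
Qed.
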